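(* For all $n\in\mathbb N$ the following hold in the $q$-shuffle algebra $\mathbb V$: $$\sum_{k=0}^n G_{n-k}\star W_{-k}\,q^{2k-n}=\sum_{k=0}^n W_{-k}\star G_{n-k}\,q^{n-2k},$$ $$\sum_{k=0}^n G_{n-k}\star W_{k+1}\,q^{n-2k}=\sum_{k=0}^n W_{k+1}\star G_{n-k}\,q^{2k-n},$$ $$\sum_{k=0}^n \tilde G_{n-k}\star W_{-k}\,q^{n-2k}=\sum_{k=0}^n W_{-k}\star \tilde G_{n-k}\,q^{2k-n},$$ $$\sum_{k=0}^n \tilde G_{n-k}\star W_{k+1}\,q^{2k-n}=\sum_{k=0}^n W_{k+1}\star \tilde G_{n-k}\,q^{n-2k}.$$
   Context: Let $\mathbb F$ be a field and let $q\in\mathbb F$ be nonzero and not a root of unity. Let $\mathbb V$ be the free associative $\mathbb F$-algebra on noncommuting $x,y$, with basis the words (including $1$). Juxtaposition denotes concatenation. Set $\langle x,x\rangle=\langle y,y\rangle=2$ and $\langle x,y\rangle=\langle y,x\rangle=-2$. The $q$-shuffle product $\star$ is the bilinear product determined as follows: - $1\star v=v\star 1=v$; - for nontrivial words $u=u_1\cdots u_r$ and $v=v_1\cdots v_s$, $$u\star v=u_1((u_2\cdots u_r)\star v)+v_1(u\star(v_2\cdots v_s))q^{\langle u_1,v_1\rangle+\cdots+\langle u_r,v_1\rangle}.$$ This makes $\mathbb V$ an associative algebra, the $q$-shuffle algebra. For $k\in\mathbb N$: - $W_{-k}=xyx\cdots x$ is the alternating word of length $2k+1$ beginning and ending with $x$;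 - $W_{k+1}=yxy\cdots y$ is the alternating word of length $2k+1$ beginning and ending with $y$; - $G_k=yxyx\cdots yx$ is the word of length $2k$; - $\tilde G_k=xyxy\cdots xy$ is the word of length $2k$; - $G_0=\tilde G_0=1$. *)

From mathcomp Require Import all_boot all_order all_algebra.
Set Implicit Arguments. Unset Strict Implicit. Unset Printing Implicit Defensive.
Import Order.TTheory GRing.Theory Num.Theory.
Local Open Scope ring_scope.

Definition letter := bool.
Definition lx : letter := false.
Definition ly : letter := true.
Definition word := seq letter.

Definition ip (a b : letter) : int := if a == b then 2%R else (- 2)%R.

Section QShuffle.
Variables (F : fieldType) (q : F).

(* A formal F-linear combination of words, as a list of (coefficient, word). *)
Definition fsum := seq (F * word).

Definition prep (a : letter) (s : fsum) : fsum := [seq (p.1, a :: p.2) | p <- s].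
Definition scal (c : F) (s : fsum) : fsum := [seq (c * p.1, p.2) | p <- s].

(* The q-shuffle product of two words, as a formal linear combination:
   1 * v = v * 1 = v, and
   u * v = u1 ((u2..ur) * v) + v1 (u * (v2..vs)) q^{<u1,v1>+...+<ur,v1>}. *)
Fixpoint qsh (u : word) : word -> fsum :=
  match u with
  | [::] => fun v => [:: (1, v)]
  | a :: u' =>
      fix inner (v : word) : fsum :=
        match v with
        | [::] => [:: (1, a :: u')]
        | b :: v' => prep a (qsh u' v) ++
                     scal (q ^ (\sum_(c <- a :: u') ip c b)) (prep b (inner v'))
        end
  end.

Definition coef (s : fsum) (w : word) : F :=
  \sum_(p <- s) (if p.2 == w then p.1 else 0).

(* An element of V is determined by its coefficients on the word basis;
   star u v w is the coefficient of w in u * v (q-shuffle product). *)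
Definition star (u v : word) (w : word) : F := coef (qsh u v) w.

End QShuffle.

(* W_{-k} = xyx...x (length 2k+1), W_{k+1} = yxy...y (length 2k+1),
   G_k = yxyx...yx (length 2k), Gt_k = xyxy...xy (length 2k). *)
Definition Wneg (k : nat) : word := mkseq (fun i => if odd i then ly else lx) (2 * k).+1.
Definition Wpos (k : nat) : word := mkseq (fun i => if odd i then lx else ly) (2 * k).+1.
Definition Gw (k : nat) : word := mkseq (fun i => if odd i then lx else ly) (2 * k).
Definition Gtw (k : nat) : word := mkseq (fun i => if odd i then ly else lx) (2 * k).

From mathcomp Require Import all_boot all_order all_algebra.
From mathcomp Require Import ring zify.
Set Implicit Arguments. Unset Strict Implicit. Unset Printing Implicit Defensive.
Import Order.TTheory GRing.Theory Num.Theory.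
Local Open Scope ring_scope.

(* Read coefficientwise, the definition of the q-shuffle is a recursion on the
   first letter of the target word w.  By induction on w it implies the mirror
   recursion on the last letter (stripping a first and a last letter commute,
   and the powers of q agree because <.,.> is symmetric).  Hence reversing all
   three words, which also exchanges the two factors, preserves coefficients,
   and so does swapping the letters x and y.  Reversal maps Gt_k to G_k and
   fixes W_{-k}; the swap maps W_{-k} to W_{k+1} and G_k to Gt_k; so all four
   identities reduce to the first one.  For that one, strip the first letter of
   w.  A letter y can only come from G_{n-k}, at the cost q^{<W_{-k},y>} = q^{-2}
   when it is the right factor, leaving products of two W's that match under
   k |-> n-1-k.  A letter x can only come from W_{-k}, and <G_j,x> = 0, leaving
   G_{n-k} * G_k against G_k * G_{n-k}, which match under k |-> n-k. *)

Definition ipw (u : word) (b : letter) : int := \sum_(c <- u) ip c b.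

Lemma ipC a b : ip a b = ip b a. Proof. by case: a; case: b. Qed.

Lemma ipw_nil b : ipw [::] b = 0. Proof. by rewrite /ipw big_nil. Qed.

Lemma ipw_cons c u b : ipw (c :: u) b = ip c b + ipw u b.
Proof. by rewrite /ipw big_cons. Qed.

Lemma ipw_rcons u c b : ipw (rcons u c) b = ipw u b + ip c b.
Proof. by rewrite /ipw -cats1 big_cat big_seq1. Qed.

Lemma ipw_rev u b : ipw (rev u) b = ipw u b.
Proof. by rewrite /ipw big_rev. Qed.

Lemma ipw_negb u b : ipw (map negb u) (~~ b) = ipw u b.
Proof. by rewrite /ipw big_map; apply: eq_bigr => c _; case: c; case: b. Qed.

Section QShuffleCoef.
Variables (F : fieldType) (q : F).

Definition lder (u : word) (a : letter) (f : word -> F) : F :=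
  if u is c :: u' then (if c == a then f u' else 0) else 0.

Definition rder (u : word) (a : letter) (f : word -> F) : F :=
  if u is c :: u' then (if last c u' == a then f (belast c u') else 0) else 0.

Lemma rder_rcons u c a f : rder (rcons u c) a f = if c == a then f u else 0.
Proof. by case: u => [|d u] //=; rewrite last_rcons belast_rcons. Qed.

Lemma rder_rev u a f : rder (rev u) a f = lder u a (fun u' => f (rev u')).
Proof. by case: u => [|c u] //; rewrite rev_cons rder_rcons. Qed.

Lemma lder_negb u a f :
  lder (map negb u) (~~ a) f = lder u a (fun u' => f (map negb u')).
Proof. by case: u => [|c u] //=; case: c; case: a. Qed.

Lemma eq_lder u a f g :
  (forall u', u = a :: u' -> f u' = g u') -> lder u a f = lder u a g.
Proof. by case: u => [|c u] //= fg; case: eqP => [ca|//]; rewrite fg ?ca. Qed.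

Lemma eq_rder u a f g :
  (forall u', u = rcons u' a -> f u' = g u') -> rder u a f = rder u a g.
Proof.
case/lastP: u => [|u c] // fg; rewrite !rder_rcons.
by case: eqP => [ca|//]; rewrite fg ?ca.
Qed.

Lemma lderD u a f g :
  lder u a (fun x => f x + g x) = lder u a f + lder u a g.
Proof. by case: u => [|c u] /=; [|case: eqP]; rewrite ?addr0. Qed.

Lemma rderD u a f g :
  rder u a (fun x => f x + g x) = rder u a f + rder u a g.
Proof.
by case/lastP: u => [|u c]; rewrite ?rder_rcons; [|case: eqP]; rewrite ?addr0.
Qed.

Lemma lderMl u a c f : lder u a (fun x => c * f x) = c * lder u a f.
Proof. by case: u => [|d u] /=; [|case: eqP]; rewrite ?mulr0. Qed.

Lemma rderMl u a c f : rder u a (fun x => c * f x) = c * rder u a f.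
Proof.
by case/lastP: u => [|u d]; rewrite ?rder_rcons ?mulr0 //; case: eqP; rewrite ?mulr0.
Qed.

Lemma lder_rderC u v a b (f : word -> word -> F) :
  lder u a (fun u' => rder v b (f u')) = rder v b (fun v' => lder u a (f^~ v')).
Proof.
case: u => [|c u]; case/lastP: v => [|v d]; rewrite /= ?rder_rcons ?if_same //.
by case: (c == a); case: (d == b).
Qed.

Lemma lder_rder u a b (f : word -> F) :
  lder u a (fun u' => rder u' b f) = rder u b (fun u' => lder u' a f).
Proof.
case: u => [|c u] //=; case/lastP: u => [|u d] /=; first by rewrite !if_same.
rewrite rder_rcons last_rcons belast_rcons /=.
by case: (c == a); case: (d == b).
Qed.

Lemma qsh_nilr u : qsh q u [::] = [:: (1, u)].
Proof. by case: u. Qed.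

Lemma qsh_cons c u b v : qsh q (c :: u) (b :: v) =
  prep c (qsh q u (b :: v)) ++ scal (q ^ ipw (c :: u) b) (prep b (qsh q (c :: u) v)).
Proof. by []. Qed.

Lemma coef_cat (s t : fsum F) w : coef (s ++ t) w = coef s w + coef t w.
Proof. by rewrite /coef big_cat. Qed.

Lemma coef_prep c (s : fsum F) w : coef (prep c s) w = lder w c (coef s).
Proof.
rewrite /coef /prep big_map; case: w => [|a w] /=; first by rewrite big1.
case: eqP => [->|ne]; first by apply: eq_bigr => p _ /=; rewrite eqseq_cons eqxx.
by rewrite big1 // => p _ /=; rewrite eqseq_cons eq_sym (introF eqP ne).
Qed.

Lemma coef_scal (c : F) (s : fsum F) w : coef (scal c s) w = c * coef s w.
Proof.
rewrite /coef /scal big_map mulr_sumr; apply: eq_bigr => p _ /=.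
by case: ifP; rewrite ?mulr0.
Qed.

Lemma coef_seq1 v w : coef [:: (1 : F, v)] w = (v == w)%:R.
Proof. by rewrite /coef big_seq1 /=; case: eqP. Qed.

Lemma star_nil u v : star q u v [::] = ((u == [::]) && (v == [::]))%:R.
Proof.
case: u => [|c u]; first by rewrite /star coef_seq1.
case: v => [|b v]; first by rewrite /star coef_seq1.
by rewrite /star qsh_cons coef_cat coef_scal !coef_prep /= mulr0 addr0.
Qed.

Lemma starL u v a w : star q u v (a :: w) =
  lder u a (fun u' => star q u' v w) + lder v a (fun v' => q ^ ipw u a * star q u v' w).
Proof.
case: u => [|c u].
  rewrite /star coef_seq1 ipw_nil expr0z add0r.
  by case: v => [|b v] //=; rewrite coef_seq1 mul1r eqseq_cons; case: eqP.
case: v => [|b v].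
  by rewrite /star coef_seq1 /= eqseq_cons addr0 qsh_nilr coef_seq1; case: (c == a).
rewrite /star qsh_cons coef_cat coef_scal !coef_prep /= !(eq_sym a).
by case: (b =P a) => [->|_]; rewrite ?mulr0.
Qed.

Lemma star_negb u v w : star q (map negb u) (map negb v) w = star q u v (map negb w).
Proof.
elim: w u v => [|a w IH] u v.
  by rewrite !star_nil -!size_eq0 !size_map.
rewrite map_cons !starL -[a]negbK !lder_negb ipw_negb negbK.
by congr (_ + _); apply: eq_lder => x _; rewrite IH.
Qed.

Hypothesis hq0 : q != 0.

Lemma starR u v w a : star q u v (rcons w a) =
  rder u a (fun u' => q ^ ipw v a * star q u' v w) + rder v a (fun v' => star q u v' w).
Proof.
elim: w u v => [|d w IH] u v.
  rewrite starL.
  case: u => [|c [|c' u]]; case: v => [|b [|b' v]];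
    rewrite /= ?star_nil /= ?ipw_nil ?expr0z ?mul1r ?mulr0 ?addr0 ?add0r ?if_same //.
rewrite rcons_cons starL.
under (@eq_lder u) => u' _ do rewrite IH.
under (@eq_lder v) => v' _ do rewrite IH mulrDr -!rderMl.
under (@eq_rder u) => u' _ do rewrite starL mulrDr -!lderMl.
under (@eq_rder v) => v' _ do rewrite starL.
rewrite !lderD !rderD !lder_rderC !lder_rder addrACA; congr (_ + _ + _).
apply: eq_rder => u' ->; apply: eq_lder => v' ->.
rewrite !mulrA -!expfzDr // ipw_rcons ipw_cons (ipC a d).
by congr (q ^ _ * _); ring.
Qed.

Lemma star_rev u v w : star q u v w = star q (rev v) (rev u) (rev w).
Proof.
elim: w u v => [|a w IH] u v.
  by rewrite !star_nil -!size_eq0 !size_rev andbC.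
rewrite starL rev_cons starR !rder_rev !ipw_rev addrC.
by congr (_ + _); apply: eq_lder => x _; rewrite IH.
Qed.

End QShuffleCoef.

Lemma mkseq_cons (T : Type) (f : nat -> T) n :
  mkseq f n.+1 = f 0%N :: mkseq (f \o succn) n.
Proof. by rewrite /mkseq /= -add1n iotaDl -map_comp. Qed.

Lemma Wneg_cons k : Wneg k = lx :: Gw k.
Proof. by rewrite /Wneg mkseq_cons; congr (_ :: _); apply: eq_mkseq => i /=; case: odd. Qed.

Lemma Gw_S k : Gw k.+1 = ly :: Wneg k.
Proof.
rewrite /Gw mulnS mkseq_cons; congr (_ :: _).
by apply: eq_mkseq => i /=; case: odd.
Qed.

Lemma negb_Wneg k : map negb (Wneg k) = Wpos k.
Proof. by rewrite /Wneg /Wpos /mkseq -map_comp; apply: eq_map => i /=; case: odd. Qed.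

Lemma negb_Gtw k : map negb (Gtw k) = Gw k.
Proof. by rewrite /Gtw /Gw /mkseq -map_comp; apply: eq_map => i /=; case: odd. Qed.

Lemma negb_Gw k : map negb (Gw k) = Gtw k.
Proof. by rewrite /Gw /Gtw /mkseq -map_comp; apply: eq_map => i /=; case: odd. Qed.

Lemma rev_Wneg k : rev (Wneg k) = Wneg k.
Proof.
apply: (@eq_from_nth _ lx); rewrite size_rev // /Wneg size_mkseq => i lti.
rewrite nth_rev ?size_mkseq // !nth_mkseq ?subSS ?ltnS ?leq_subr //.
by rewrite oddN // oddM.
Qed.

Lemma rev_Gtw k : rev (Gtw k) = Gw k.
Proof.
apply: (@eq_from_nth _ lx); first by rewrite size_rev /Gw /Gtw !size_mkseq.
rewrite size_rev /Gtw size_mkseq => i lti.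
rewrite nth_rev ?size_mkseq // /Gw !nth_mkseq //; last first.
  by rewrite ltn_subLR // addSn ltnS leq_addl.
by rewrite oddB // oddM /=; case: odd.
Qed.

Lemma ipw_Gw j a : ipw (Gw j) a = 0.
Proof.
elim: j => [|j IH]; first by rewrite ipw_nil.
by rewrite Gw_S Wneg_cons !ipw_cons IH addr0; case: (a).
Qed.

Lemma ipw_Wneg_y k : ipw (Wneg k) ly = -2.
Proof. by rewrite Wneg_cons ipw_cons ipw_Gw addr0. Qed.

Section GWCoefficients.
Variables (F : fieldType) (q : F).

Lemma lder_Wneg_y k (f : word -> F) : lder (Wneg k) ly f = 0.
Proof. by rewrite Wneg_cons. Qed.

Lemma star_Gw_Wneg_nil j k : star q (Gw j) (Wneg k) [::] = 0.
Proof. by rewrite star_nil Wneg_cons andbF. Qed.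

Lemma star_Wneg_Gw_nil j k : star q (Wneg k) (Gw j) [::] = 0.
Proof. by rewrite star_nil Wneg_cons. Qed.

Lemma star_Gw_Wneg_x j k w : star q (Gw j) (Wneg k) (lx :: w) = star q (Gw j) (Gw k) w.
Proof.
rewrite starL Wneg_cons /= ipw_Gw expr0z mul1r.
by case: j => [|j]; rewrite ?Gw_S /= add0r.
Qed.

Lemma star_Wneg_Gw_x j k w : star q (Wneg k) (Gw j) (lx :: w) = star q (Gw k) (Gw j) w.
Proof. by rewrite starL Wneg_cons /=; case: j => [|j]; rewrite ?Gw_S /= addr0. Qed.

Lemma star_Gw_Wneg_y j k w :
  star q (Gw j.+1) (Wneg k) (ly :: w) = star q (Wneg j) (Wneg k) w.
Proof. by rewrite starL lder_Wneg_y Gw_S addr0. Qed.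

Lemma star_Wneg_Gw_y j k w :
  star q (Wneg k) (Gw j.+1) (ly :: w) = q ^ (-2) * star q (Wneg k) (Wneg j) w.
Proof. by rewrite starL Gw_S lder_Wneg_y ipw_Wneg_y add0r. Qed.

Lemma star_Gw0_Wneg_y k w : star q (Gw 0) (Wneg k) (ly :: w) = 0.
Proof. by rewrite starL lder_Wneg_y addr0. Qed.

Lemma star_Wneg_Gw0_y k w : star q (Wneg k) (Gw 0) (ly :: w) = 0.
Proof. by rewrite starL lder_Wneg_y add0r. Qed.

End GWCoefficients.

Lemma star_Gw_Wneg_sumC (F : fieldType) (q : F) (hq0 : q != 0) n w :
  \sum_(k < n.+1) star q (Gw (n - k)) (Wneg k) w * q ^ ((2 * k)%:Z - n%:Z)
  = \sum_(k < n.+1) star q (Wneg k) (Gw (n - k)) w * q ^ (n%:Z - (2 * k)%:Z).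
Proof.
case: w => [|[] w].
- by rewrite !big1 // => k _; rewrite ?star_Gw_Wneg_nil ?star_Wneg_Gw_nil mul0r.
- case: n => [|n]; first by rewrite !big_ord1 star_Gw0_Wneg_y star_Wneg_Gw0_y !mul0r.
  rewrite big_ord_recr [RHS]big_ord_recr /= subnn.
  rewrite star_Gw0_Wneg_y star_Wneg_Gw0_y !mul0r !addr0.
  rewrite (reindex_inj rev_ord_inj); apply: eq_bigr => k _ /=.
  have kn : (k <= n)%N := ltn_ord k.
  rewrite subKn // subSS subSn // star_Gw_Wneg_y star_Wneg_Gw_y.
  rewrite mulrAC -expfzDr // mulrC; congr (q ^ _ * _); lia.
- rewrite (reindex_inj rev_ord_inj); apply: eq_bigr => k _ /=.
  have kn : (k <= n)%N := ltn_ord k.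
  rewrite star_Gw_Wneg_x star_Wneg_Gw_x subSS subKn //.
  congr (_ * q ^ _); lia.
Qed.

Lemma star_Gtw_Wneg_sumC (F : fieldType) (q : F) (hq0 : q != 0) n w :
  \sum_(k < n.+1) star q (Gtw (n - k)) (Wneg k) w * q ^ (n%:Z - (2 * k)%:Z)
  = \sum_(k < n.+1) star q (Wneg k) (Gtw (n - k)) w * q ^ ((2 * k)%:Z - n%:Z).
Proof.
under eq_bigr => k _ do rewrite (star_rev hq0) rev_Wneg rev_Gtw.
under [RHS]eq_bigr => k _ do rewrite (star_rev hq0) rev_Wneg rev_Gtw.
by rewrite star_Gw_Wneg_sumC.
Qed.

Lemma star_Gw_Wpos_sumC (F : fieldType) (q : F) (hq0 : q != 0) n w :
  \sum_(k < n.+1) star q (Gw (n - k)) (Wpos k) w * q ^ (n%:Z - (2 * k)%:Z)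
  = \sum_(k < n.+1) star q (Wpos k) (Gw (n - k)) w * q ^ ((2 * k)%:Z - n%:Z).
Proof.
under eq_bigr => k _ do rewrite -negb_Gtw -negb_Wneg star_negb.
under [RHS]eq_bigr => k _ do rewrite -negb_Gtw -negb_Wneg star_negb.
exact: star_Gtw_Wneg_sumC.
Qed.

Lemma star_Gtw_Wpos_sumC (F : fieldType) (q : F) (hq0 : q != 0) n w :
  \sum_(k < n.+1) star q (Gtw (n - k)) (Wpos k) w * q ^ ((2 * k)%:Z - n%:Z)
  = \sum_(k < n.+1) star q (Wpos k) (Gtw (n - k)) w * q ^ (n%:Z - (2 * k)%:Z).
Proof.
under eq_bigr => k _ do rewrite -negb_Gw -negb_Wneg star_negb.
under [RHS]eq_bigr => k _ do rewrite -negb_Gw -negb_Wneg star_negb.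
exact: star_Gw_Wneg_sumC.
Qed.

Theorem proposition6p3 (F : fieldType) (q : F) (hq0 : q != 0)
  (hq : forall m : nat, (0 < m)%N -> q ^+ m != 1) (n : nat) :
  [/\ forall w : word,
        \sum_(k < n.+1) star q (Gw (n - k)) (Wneg k) w * q ^ ((2 * k)%:Z - n%:Z)
        = \sum_(k < n.+1) star q (Wneg k) (Gw (n - k)) w * q ^ (n%:Z - (2 * k)%:Z),
      forall w : word,
        \sum_(k < n.+1) star q (Gw (n - k)) (Wpos k) w * q ^ (n%:Z - (2 * k)%:Z)
        = \sum_(k < n.+1) star q (Wpos k) (Gw (n - k)) w * q ^ ((2 * k)%:Z - n%:Z),
      forall w : word,
        \sum_(k < n.+1) star q (Gtw (n - k)) (Wneg k) w * q ^ (n%:Z - (2 * k)%:Z)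
        = \sum_(k < n.+1) star q (Wneg k) (Gtw (n - k)) w * q ^ ((2 * k)%:Z - n%:Z)
    & forall w : word,
        \sum_(k < n.+1) star q (Gtw (n - k)) (Wpos k) w * q ^ ((2 * k)%:Z - n%:Z)
        = \sum_(k < n.+1) star q (Wpos k) (Gtw (n - k)) w * q ^ (n%:Z - (2 * k)%:Z)].
Proof.
split=> w; [exact: star_Gw_Wneg_sumC | exact: star_Gw_Wpos_sumC
           | exact: star_Gtw_Wneg_sumC | exact: star_Gtw_Wpos_sumC].
Qed.
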